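(* Let ${\mathcal B}$ be a finite family of nonzero elements of $L$. Then ${\mathcal B}$ is $w_S$-reduced if and only if for every $\rho\in\{w_S(b)+\mathbb Z: b\in{\mathcal B}\}$ the family $$\big(\operatorname{red}^{w_S(b)}_S(b)\big)_{b\in{\mathcal B},\ w_S(b)+\mathbb Z=\rho}$$ of elements of $k_{\mathfrak P_1}\times\cdots\times k_{\mathfrak P_s}$ is linearly independent over $k_\mathfrak p$.
   Context: Let $A$ be a Dedekind domain with fraction field $K$, $\mathfrak p$ a nonzero prime ideal with valuation $v_\mathfrak p$, $\pi\in\mathfrak p$ with $v_\mathfrak p(\pi)=1$, $k_\mathfrak p=A/\mathfrak p$. Let $f\in A[x]$ be monic irreducible separable, $\theta$ a root, $L=K(\theta)$, $\mathcal O$ the integral closure of $A$ in $L$, and $S=\{\mathfrak P_1,\dots,\mathfrak P_s\}$ the set of all primes of $\mathcal O$ over $\mathfrak p$, with ramification indices $e_i$, normalized valuations $v_{\mathfrak P_i}$, valuation rings $\mathcal O_{(\mathfrak P_i)}$, residue fields $k_{\mathfrak P_i}$, fixed elements $\pi_{\mathfrak P_i}$ with $v_{\mathfrak P_i}(\pi_{\mathfrak P_i})=1$; $w_{\mathfrak P_i}=v_{\mathfrak P_i}/e_i$ and $w_S(z)=\min_i w_{\mathfrak P_i}(z)$. For a prime $\mathfrak P$ with ramification $e$, $r\in\mathbb Q$ and $z\in L$ with $w_\mathfrak P(z)\ge r$, $\operatorname{red}^r_\mathfrak P(z)\in k_\mathfrak P$ is $0$ if $w_\mathfrak P(z)>r$,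 and if $w_\mathfrak P(z)=r$ (so $er\in\mathbb Z$, $er=qe+m$, $0\le m<e$) it is the residue of $z\pi^{-q}\pi_\mathfrak P^{-m}$. For $z$ with $w_S(z)\ge r$, $\operatorname{red}^r_S(z):=(\operatorname{red}^r_{\mathfrak P_i}(z))_{1\le i\le s}$. A finite family ${\mathcal B}\subset L$ is $w$-reduced if $w(\sum_b\lambda_bb)=\min_bw(\lambda_bb)$ for all $\lambda_b\in K$. *)

(* Abstract valued-field rendering of the Dedekind setting. *)
From HB Require Import structures.
From mathcomp Require Import all_boot all_order all_algebra all_field.
Set Implicit Arguments. Unset Strict Implicit. Unset Printing Implicit Defensive.
Import Order.TTheory GRing.Theory Num.Theory.
Local Open Scope ring_scope.

(* A normalized discrete valuation v : F^* ->> Z (its value at 0 is irrelevant,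
   0 is treated as having valuation +oo everywhere below). *)
Definition is_dvaluation (F : fieldType) (v : F -> int) : Prop :=
  [/\ forall x y, x != 0 -> y != 0 -> v (x * y) = v x + v y,
      forall x y, x != 0 -> y != 0 -> x + y != 0 ->
        Num.min (v x) (v y) <= v (x + y)
    & exists x, x != 0 /\ v x = 1].

Definition vring (F : fieldType) (v : F -> int) (x : F) : bool :=
  (x == 0) || (0 <= v x).

(* r : F -> k restricted to the valuation ring of v is the residue map onto
   the residue field k (surjective ring morphism with kernel the maximal ideal). *)
Definition is_residue_map (F : fieldType) (v : F -> int) (k : fieldType)
    (r : F -> k) : Prop :=
  [/\ forall x y, vring v x -> vring v y -> r (x + y) = r x + r y,
      forall x y, vring v x -> vring v y -> r (x * y) = r x * r y,
      r 1 = 1,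
      forall x, vring v x -> (r x == 0) = (x == 0) || (0 < v x)
    & forall y, exists x, vring v x /\ r x = y].

Definition wval (F : fieldType) (e : nat) (v : F -> int) (z : F) : rat :=
  (v z)%:~R / (e%:R).

Definition minl (l : seq rat) : rat := foldr Num.min (head 0 l) l.

Definition wS (F : fieldType) (s : nat) (e : 'I_s -> nat) (v : 'I_s -> F -> int)
    (z : F) : rat :=
  minl [seq wval (e i) (v i) z | i <- enum 'I_s].

Definition redP (K : fieldType) (L : fieldExtType K) (k : fieldType)
    (res : L -> k) (e : nat) (v : L -> int) (pi : K) (piP : L)
    (r : rat) (z : L) : k :=
  if (z != 0) && (wval e v z == r) then
    let q := (v z %/ e%:Z)%Z in
    let m := (v z %% e%:Z)%Z in
    res (z * (pi%:A) ^ (- q) * piP ^ (- m))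
  else 0.

(* A finite family b of nonzero elements is w-reduced:
   w(sum lam_b b) = min_b w(lam_b b) for all lam, with w(0) = +oo. *)
Definition w_reduced (K : fieldType) (L : fieldExtType K) (w : L -> rat)
    (n : nat) (b : 'I_n -> L) : Prop :=
  forall lam : 'I_n -> K, (exists j, lam j != 0) ->
    (\sum_(j < n) lam j *: b j != 0) /\
    w (\sum_(j < n) lam j *: b j) =
      minl [seq w (lam j *: b j) | j <- enum 'I_n & lam j != 0].

(* The subfamily (x j)_{j in J} of prod_i k_i is linearly independent over kp,
   where kp acts on k_i through iota i. *)
Definition prod_lin_indep (kp : fieldType) (s : nat) (k : 'I_s -> fieldType)
    (iota : forall i, kp -> k i) (n : nat) (J : pred 'I_n)
    (x : 'I_n -> forall i, k i) : Prop :=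
  forall mu : 'I_n -> kp,
    (forall i, \sum_(j < n | J j) iota i (mu j) * x j i = 0) ->
    forall j, J j -> mu j = 0.

From HB Require Import structures.
From mathcomp Require Import all_boot all_order all_algebra all_field.
From mathcomp Require Import lra.
Import Order.TTheory GRing.Theory Num.Theory.
Set Implicit Arguments. Unset Strict Implicit. Unset Printing Implicit Defensive.
Local Open Scope ring_scope.

(** For each [P_i] let [red_factor i V = pi^(-(V div e_i)) * pi_i^(-(V mod e_i))], an
    element of valuation [-V] at [P_i]. If [w_S(lam_j b_j) >= m] for all [j], then the
    residue at [P_i] of [(sum_j lam_j b_j) * red_factor i (floor (m e_i))] equals
    [sum_j iota_i(mu_j) red^(w_S(b_j))_(P_i)(b_j)], where [mu_j] is the residue of the
    unit part [lam_j pi^(-v(lam_j))] when [w_S(lam_j b_j) = m] and [0] otherwise; and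
    this residue is nonzero exactly when the sum has [w_(P_i)]-value [m]. So a
    nontrivial relation among the reductions lifts to a combination whose value
    exceeds the minimum of the values of its terms, while independent reductions of
    the terms of minimal value survive in some component [k_(P_i)], forcing the value
    of the sum down to that minimum. *)

Section DiscreteValuation.
Variables (F : fieldType) (v : F -> int).
Hypothesis hv : is_dvaluation v.

Lemma dvalM x y : x != 0 -> y != 0 -> v (x * y) = v x + v y.
Proof. by case: hv => vM _ _; apply: vM. Qed.

Lemma dvalD_min x y : x != 0 -> y != 0 -> x + y != 0 ->
  Num.min (v x) (v y) <= v (x + y).
Proof. by case: hv => _ vD _; apply: vD. Qed.

Lemma dval1 : v 1 = 0.
Proof.
have := dvalM (oner_neq0 F) (oner_neq0 F); rewrite mulr1 => h.
by apply: (addrI (v 1)); rewrite -h addr0.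
Qed.

Lemma dvalV x : x != 0 -> v x^-1 = - v x.
Proof.
move=> x0; have := dvalM x0 (invr_neq0 x0); rewrite mulfV // dval1 => h.
by apply: (addrI (v x)); rewrite -h subrr.
Qed.

Lemma dvalXn x n : x != 0 -> v (x ^+ n) = n%:Z * v x.
Proof.
move=> x0; elim: n => [|n IHn]; first by rewrite expr0 dval1 mul0r.
by rewrite exprS dvalM ?expf_neq0 // IHn -addn1 PoszD mulrDl mul1r addrC.
Qed.

Lemma dvalXz x (z : int) : x != 0 -> v (x ^ z) = z * v x.
Proof.
move=> x0; case: z => n; first by rewrite -exprnP dvalXn.
by rewrite /exprz dvalV ?expf_neq0 // dvalXn // NegzE mulNr.
Qed.

Lemma vringD x y : vring v x -> vring v y -> vring v (x + y).
Proof.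
rewrite /vring; have [-> _|x0] := eqVneq x 0; first by rewrite add0r.
have [-> |y0] := eqVneq y 0; first by rewrite addr0 (negbTE x0).
have [//|xy0 /= hx hy] := eqVneq (x + y) 0.
by apply: le_trans (dvalD_min x0 y0 xy0); rewrite le_min hx hy.
Qed.

Lemma vring_sum (I : Type) (r : seq I) (P : pred I) (f : I -> F) :
  (forall i, P i -> vring v (f i)) -> vring v (\sum_(i <- r | P i) f i).
Proof.
by move=> hf; apply: (big_ind (vring v)) => //; [rewrite /vring eqxx | exact: vringD].
Qed.

End DiscreteValuation.

Section ResidueMap.
Variables (F : fieldType) (v : F -> int) (k : fieldType) (r : F -> k).
Hypotheses (hv : is_dvaluation v) (hr : is_residue_map v r).

Lemma resD x y : vring v x -> vring v y -> r (x + y) = r x + r y.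
Proof. by case: hr => rD _ _ _ _; apply: rD. Qed.

Lemma resM x y : vring v x -> vring v y -> r (x * y) = r x * r y.
Proof. by case: hr => _ rM _ _ _; apply: rM. Qed.

Lemma res_surj y : exists x, vring v x /\ r x = y.
Proof. by case: hr. Qed.

Lemma res_neq0 x : vring v x -> (r x != 0) = (x != 0) && (v x == 0).
Proof.
case: hr => _ _ _ rE _ hx; rewrite rE // negb_or -leNgt.
by move: hx; rewrite /vring; case: eqP => //= _ hx; rewrite eq_le hx andbT.
Qed.

Lemma res0 : r 0 = 0.
Proof. by apply/eqP/negbFE; rewrite res_neq0 ?eqxx // /vring eqxx. Qed.

Lemma res_gt0 x : 0 < v x -> r x = 0.
Proof.
move=> hx; apply/eqP/negbFE; rewrite res_neq0 ?gt_eqF ?andbF //.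
by rewrite /vring ltW ?orbT.
Qed.

Lemma res_sum (I : Type) (s : seq I) (P : pred I) (f : I -> F) :
  (forall i, P i -> vring v (f i)) ->
  r (\sum_(i <- s | P i) f i) = \sum_(i <- s | P i) r (f i).
Proof.
move=> hf; suff [] : vring v (\sum_(i <- s | P i) f i) /\
    r (\sum_(i <- s | P i) f i) = \sum_(i <- s | P i) r (f i) by [].
apply: (big_ind2 (fun x y => vring v x /\ r x = y)) => [|x1 x2 y1 y2|i Pi].
- by rewrite /vring eqxx res0.
- by move=> [h1 <-] [h2 <-]; rewrite vringD ?resD.
- by rewrite hf.
Qed.

End ResidueMap.

Section WeightedValuation.
Variables (F : fieldType) (e : nat) (v : F -> int).
Hypothesis he : (0 < e)%N.

Let e_gt0 : 0 < (e%:R : rat). Proof. by rewrite ltr0n. Qed.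

Lemma mulr_wval z : wval e v z * e%:R = (v z)%:~R.
Proof. by rewrite /wval divfK ?gt_eqF. Qed.

Lemma floor_wval z : Num.floor (wval e v z * e%:R) = v z.
Proof. by rewrite mulr_wval intrKfloor. Qed.

Lemma le_wval r z : (r <= wval e v z) = (r * e%:R <= (v z)%:~R).
Proof. by rewrite -mulr_wval ler_pM2r. Qed.

Lemma lt_wval r z : (r < wval e v z) = (r * e%:R < (v z)%:~R).
Proof. by rewrite -mulr_wval ltr_pM2r. Qed.

Lemma wval_le r z : (wval e v z <= r) = ((v z)%:~R <= r * e%:R).
Proof. by rewrite -mulr_wval ler_pM2r. Qed.

Lemma wval_le_wval x y : (wval e v x <= wval e v y) = (v x <= v y).
Proof. by rewrite le_wval mulr_wval ler_int. Qed.

Hypothesis hv : is_dvaluation v.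

Lemma wvalD_min x y : x != 0 -> y != 0 -> x + y != 0 ->
  Num.min (wval e v x) (wval e v y) <= wval e v (x + y).
Proof. by move=> x0 y0 xy0; rewrite ge_min !wval_le_wval -ge_min dvalD_min. Qed.

Lemma wval_sum_ge r (I : Type) (s : seq I) (P : pred I) (f : I -> F) :
  (forall i, P i -> f i != 0 -> r <= wval e v (f i)) ->
  \sum_(i <- s | P i) f i != 0 -> r <= wval e v (\sum_(i <- s | P i) f i).
Proof.
move=> hf; apply/implyP.
apply: (big_ind (fun x => (x != 0) ==> (r <= wval e v x))) => [|x y|i /hf /implyP//].
  by rewrite eqxx.
move=> /implyP hx /implyP hy.
have [-> |x0] := eqVneq x 0; first by rewrite add0r; apply/implyP.
have [-> |y0] := eqVneq y 0; first by rewrite addr0; apply/implyP.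
apply/implyP => xy0; apply: le_trans (wvalD_min x0 y0 xy0).
by rewrite le_min hx ?hy.
Qed.

End WeightedValuation.

Lemma foldr_min_le (d : rat) (l : seq rat) x : x \in l -> foldr Num.min d l <= x.
Proof.
elim: l => [//|y l IHl]; rewrite inE ge_min => /orP[/eqP->|/IHl->].
  by rewrite lexx.
by rewrite orbT.
Qed.

Lemma foldr_min_mem (d : rat) (l : seq rat) : foldr Num.min d l \in d :: l.
Proof.
elim: l => [|y l IHl] /=; first exact: mem_head.
rewrite /Num.min; case: ifP => _; first by rewrite !inE eqxx orbT.
by move: IHl; rewrite !inE => /orP[]->; rewrite ?orbT.
Qed.

Lemma minl_le (l : seq rat) x : x \in l -> minl l <= x.
Proof. exact: foldr_min_le. Qed.

Lemma minl_mem (l : seq rat) : l != [::] -> minl l \in l.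
Proof.
case: l => [//|y l] _; change (foldr Num.min y (y :: l) \in y :: l).
have := foldr_min_mem y (y :: l).
by rewrite [in X in X -> _]inE => /orP[/eqP->|]; rewrite ?mem_head.
Qed.

Lemma minl_map_le (T : finType) (P : pred T) (f : T -> rat) j :
  P j -> minl [seq f j | j <- enum T & P j] <= f j.
Proof. by move=> Pj; apply/minl_le/map_f; rewrite mem_filter Pj mem_enum. Qed.

Lemma minl_map_attained (T : finType) (P : pred T) (f : T -> rat) j1 :
  P j1 -> exists2 j, P j & minl [seq f j | j <- enum T & P j] = f j.
Proof.
move=> Pj1; have /minl_mem/mapP[j] : [seq f j | j <- enum T & P j] != [::].
  by rewrite -size_eq0 size_map size_filter -lt0n -has_count; apply/hasP; exists j1;
    rewrite ?mem_enum.
by rewrite mem_filter => /andP[Pj _] ->; exists j.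
Qed.

Section MinimumValuation.
Variables (F : fieldType) (s : nat) (e : 'I_s -> nat) (v : 'I_s -> F -> int).
Hypothesis hs : (0 < s)%N.

Lemma wS_le i z : wS e v z <= wval (e i) (v i) z.
Proof. by apply: minl_le; apply: map_f; rewrite mem_enum. Qed.

Lemma wS_attained z : exists i, wS e v z = wval (e i) (v i) z.
Proof.
have : [seq wval (e i) (v i) z | i <- enum 'I_s] != [::].
  by rewrite -size_eq0 size_map size_enum_ord -lt0n.
by move/minl_mem/mapP => [i _ hi]; exists i.
Qed.

Lemma wS_ge r z : (forall i, r <= wval (e i) (v i) z) -> r <= wS e v z.
Proof. by move=> h; have [i ->] := wS_attained z. Qed.

End MinimumValuation.

Section Reduction.
Variables (K : fieldType) (L : fieldExtType K).
Variables (vp : K -> int) (kp : fieldType) (resp : K -> kp) (pi : K).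
Hypotheses (hvp : is_dvaluation vp) (hresp : is_residue_map vp resp).
Hypothesis hpi : pi != 0 /\ vp pi = 1.
Variables (s : nat) (e : 'I_s -> nat) (v : 'I_s -> L -> int).
Hypotheses (hs : (0 < s)%N) (he : forall i, (0 < e i)%N).
Hypothesis hv : forall i, is_dvaluation (v i).
Hypothesis hve : forall i (a : K), a != 0 -> v i (a%:A) = (e i)%:Z * vp a.
Variables (k : 'I_s -> fieldType) (res : forall i, L -> k i).
Hypothesis hres : forall i, is_residue_map (v i) (res i).
Variables (iota : forall i, kp -> k i) (piP : 'I_s -> L).
Hypothesis hiota : forall i (a : K), vring vp a -> iota i (resp a) = res i (a%:A).
Hypothesis hpiP : forall i, piP i != 0 /\ v i (piP i) = 1.

Local Notation red i := (redP (res i) (e i) (v i) pi (piP i)).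
Local Notation w i := (wval (e i) (v i)).

Let pi_neq0 : pi != 0. Proof. by case: hpi. Qed.
Let piA_neq0 : (pi%:A : L) != 0. Proof. by rewrite scaler_eq0 negb_or pi_neq0 oner_neq0. Qed.
Let piP_neq0 i : piP i != 0. Proof. by case: (hpiP i). Qed.

Definition unit_part (a : K) : K := a * pi ^ (- vp a).

Lemma unit_part0 : unit_part 0 = 0.
Proof. by rewrite /unit_part mul0r. Qed.

Lemma unit_part_neq0 a : a != 0 -> unit_part a != 0.
Proof. by move=> a0; rewrite mulf_neq0 ?expfz_neq0. Qed.

Lemma dval_unit_part a : a != 0 -> vp (unit_part a) = 0.
Proof.
move=> a0; rewrite dvalM ?expfz_neq0 // dvalXz //.
by case: hpi => _ ->; rewrite mulr1 subrr.
Qed.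

Lemma unit_partMpi a (t : int) : a != 0 -> unit_part (a * pi ^ t) = unit_part a.
Proof.
move=> a0; rewrite /unit_part dvalM ?expfz_neq0 // dvalXz //.
by case: hpi => _ ->; rewrite mulr1 opprD -mulrA -expfzDr // addrCA subrr addr0.
Qed.

Lemma resp_unit_part_neq0 a : a != 0 -> resp (unit_part a) != 0.
Proof.
move=> a0; rewrite (res_neq0 hresp) ?unit_part_neq0 ?dval_unit_part //.
by rewrite /vring dval_unit_part // lexx orbT.
Qed.

Lemma iota0 i : iota i 0 = 0.
Proof.
rewrite -(res0 hresp) hiota ?scale0r ?(res0 (hres i)) //.
by rewrite /vring eqxx.
Qed.

Definition red_factor i (V : int) : L :=
  (pi%:A : L) ^ (- (V %/ (e i)%:Z)%Z) * piP i ^ (- (V %% (e i)%:Z)%Z).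

Lemma red_factor_neq0 i V : red_factor i V != 0.
Proof. by rewrite mulf_neq0 // expfz_neq0. Qed.

Lemma dval_red_factor i V : v i (red_factor i V) = - V.
Proof.
rewrite /red_factor dvalM ?expfz_neq0 // !dvalXz // hve // (proj2 (hpiP i)).
by case: hpi => _ ->; rewrite !mulr1 mulNr -opprD -divz_eq.
Qed.

Lemma red_factorDe i V t : red_factor i (V + (e i)%:Z * t) = (pi%:A) ^ (- t) * red_factor i V.
Proof.
have e0 : (e i)%:Z != 0 by rewrite eqz_nat -lt0n he.
rewrite /red_factor (addrC V) (mulrC _ t) divzMDl // modzMDl.
by rewrite opprD expfzDr // mulrA.
Qed.

Lemma dvalZ i (a : K) z : a != 0 -> z != 0 -> v i (a *: z) = (e i)%:Z * vp a + v i z.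
Proof.
by move=> a0 z0; rewrite -mulr_algl dvalM -?hve // scaler_eq0 negb_or a0 oner_neq0.
Qed.

Lemma wvalZ i (a : K) z : a != 0 -> z != 0 -> w i (a *: z) = (vp a)%:~R + w i z.
Proof.
move=> a0 z0; rewrite /wval dvalZ // intrD intrM mulrDl pmulrn.
by rewrite mulrAC divff ?mul1r // pnatr_eq0 -lt0n he.
Qed.

Lemma wSZ (a : K) z : a != 0 -> z != 0 -> wS e v (a *: z) = (vp a)%:~R + wS e v z.
Proof.
move=> a0 z0; apply/eqP; rewrite eq_le; apply/andP; split.
  by have [i ->] := wS_attained e v hs z; rewrite -wvalZ // wS_le.
by have [i ->] := wS_attained e v hs (a *: z); rewrite wvalZ // lerD2l wS_le.
Qed.

Lemma redP_wval i z : z != 0 -> red i (w i z) z = res i (z * red_factor i (v i z)).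
Proof. by move=> z0; rewrite /redP z0 eqxx /red_factor mulrA. Qed.

Lemma redP_neq i r z : w i z != r -> red i r z = 0.
Proof. by rewrite /redP => /negbTE->; rewrite andbF. Qed.

Lemma redP_wS_lt i r z : r < wS e v z -> red i r z = 0.
Proof. by move=> h; rewrite redP_neq // gt_eqF // (lt_le_trans h) ?wS_le. Qed.

Lemma res_scale i (a : K) z r : a != 0 -> z != 0 -> r <= w i (a *: z) ->
  res i (a *: z * red_factor i (Num.floor (r * (e i)%:R))) =
  iota i (resp (unit_part a)) * red i (r - (vp a)%:~R) z.
Proof.
move=> a0 z0 hr; have az0 : a *: z != 0 by rewrite scaler_eq0 negb_or a0.
have [hz|hz] := eqVneq (w i z) (r - (vp a)%:~R); last first.
  rewrite redP_neq // mulr0; apply: (res_gt0 (hres i)).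
  rewrite dvalM ?red_factor_neq0 // dval_red_factor subr_gt0 floor_lt_int -lt_wval ?he //.
  by rewrite lt_def hr andbT wvalZ // addrC; apply: contra hz => /eqP <-; rewrite addrK.
rewrite -hz redP_wval //.
have -> : r = w i (a *: z) by rewrite wvalZ // hz addrC subrK.
rewrite floor_wval ?he // dvalZ // addrC red_factorDe.
have -> : a *: z * (pi%:A ^ (- vp a) * red_factor i (v i z)) =
          (unit_part a)%:A * (z * red_factor i (v i z)).
  have -> : (unit_part a)%:A = a%:A * (pi%:A : L) ^ (- vp a).
    by rewrite -!in_algE rmorphM fmorphXz.
  by rewrite -[a *: z]mulr_algl -!mulrA [z * _]mulrCA.
have vr_unit : vring vp (unit_part a).
  by rewrite /vring dval_unit_part // lexx orbT.
have vr_unitA : vring (v i) (unit_part a)%:A.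
  by rewrite /vring hve ?unit_part_neq0 // dval_unit_part // mulr0 lexx orbT.
have vr_zu : vring (v i) (z * red_factor i (v i z)).
  by rewrite /vring dvalM ?red_factor_neq0 // dval_red_factor subrr lexx orbT.
by rewrite [LHS](resM (hres i)) // hiota.
Qed.

Lemma res_lincomb i n (lam : 'I_n -> K) (b : 'I_n -> L) r :
  (forall j, b j != 0) -> (forall j, lam j != 0 -> r <= w i (lam j *: b j)) ->
  vring (v i) ((\sum_(j < n) lam j *: b j) * red_factor i (Num.floor (r * (e i)%:R))) /\
  res i ((\sum_(j < n) lam j *: b j) * red_factor i (Num.floor (r * (e i)%:R))) =
  \sum_(j < n) iota i (resp (unit_part (lam j))) * red i (r - (vp (lam j))%:~R) (b j).
Proof.
move=> hb hr; set U := red_factor i _.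
have hterm j : vring (v i) (lam j *: b j * U) /\ res i (lam j *: b j * U) =
    iota i (resp (unit_part (lam j))) * red i (r - (vp (lam j))%:~R) (b j).
  have [->|lj] := eqVneq (lam j) 0.
    by rewrite scale0r mul0r unit_part0 (res0 hresp) iota0 mul0r (res0 (hres i)) /vring eqxx.
  split; last exact: res_scale (hr j lj).
  have lb0 : lam j *: b j != 0 by rewrite scaler_eq0 negb_or lj hb.
  rewrite /vring dvalM ?red_factor_neq0 // dval_red_factor subr_ge0 -(ler_int rat) orbC.
  by rewrite (le_trans (floor_le _)) // -le_wval ?he ?hr.
rewrite big_distrl /=; split; first by apply: (vring_sum (hv i)) => j _; case: (hterm j).
by rewrite (res_sum (hv i) (hres i)) => [|j _]; [apply: eq_bigr => j _ |]; case: (hterm j).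
Qed.

Lemma lin_indep_of_reduced n (b : 'I_n -> L) : (forall j, b j != 0) ->
  w_reduced (wS e v) b ->
  forall j0 : 'I_n, prod_lin_indep iota
    (fun j => (wS e v (b j) - wS e v (b j0)) \is a Num.int)
    (fun j i => red i (wS e v (b j)) (b j)).
Proof.
move=> hb hred j0 mu hrel j1 J1; apply/eqP/negPn/negP => mu1.
set m := wS e v (b j0); pose J j := (wS e v (b j) - m) \is a Num.int.
have /fin_all_exists [a ha] : forall j, exists x, vring vp x /\ resp x = mu j.
  by move=> j; apply: (res_surj hresp).
pose t j := Num.floor (wS e v (b j) - m).
pose lam j := if J j && (mu j != 0) then a j * pi ^ (- t j) else 0.
have hlam j : J j -> mu j != 0 ->
    [/\ lam j != 0, wS e v (lam j *: b j) = m & unit_part (lam j) = a j].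
  move=> Jj muj; have [vra resa] := ha j.
  have /andP[a0 /eqP va0] : (a j != 0) && (vp (a j) == 0).
    by rewrite -(res_neq0 hresp) // resa.
  have lamE : lam j = a j * pi ^ (- t j) by rewrite /lam Jj muj.
  have lj : lam j != 0 by rewrite lamE mulf_neq0 ?expfz_neq0.
  split=> //; last by rewrite lamE unit_partMpi // /unit_part va0 expr0z mulr1.
  rewrite wSZ // lamE dvalM ?expfz_neq0 // dvalXz // va0 add0r.
  by case: hpi => _ ->; rewrite mulr1 intrN floorK // opprB subrK.
have hwlam j : lam j != 0 -> wS e v (lam j *: b j) = m.
  rewrite /lam; case: ifP => [/andP[Jj muj] _|_]; last by rewrite eqxx.
  by case: (hlam j Jj muj) => lj; rewrite /lam Jj muj.
have hterm i j : iota i (resp (unit_part (lam j))) * red i (m - (vp (lam j))%:~R) (b j) =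
    if J j then iota i (mu j) * red i (wS e v (b j)) (b j) else 0.
  have [Jj|nJj] := boolP (J j); last first.
    by rewrite /lam (negbTE nJj) unit_part0 (res0 hresp) iota0 mul0r.
  have [muj|/negbNE/eqP mu0] := boolP (mu j != 0); last first.
    by rewrite /lam Jj mu0 eqxx /= unit_part0 (res0 hresp) !iota0 !mul0r.
  have [lj wlj ulj] := hlam j Jj muj.
  by rewrite ulj (proj2 (ha j)) -wlj wSZ // addrC addKr.
have [l1 _ _] := hlam j1 J1 mu1.
have [S0 wS_S] := hred lam (ex_intro _ j1 l1).
set S := \sum_(j < n) _ in S0 wS_S.
have {}wS_S : wS e v S = m.
  have [j lj hj] :=
    @minl_map_attained _ (fun j => lam j != 0) (fun j => wS e v (lam j *: b j)) _ l1.
  exact: (etrans wS_S (etrans hj (hwlam j lj))).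
have [i wiS] := wS_attained e v hs S.
have hle j : lam j != 0 -> m <= w i (lam j *: b j) by move=> /hwlam <-; apply: wS_le.
have [vrS resS] := @res_lincomb i n lam b m hb hle.
have : res i (S * red_factor i (Num.floor (m * (e i)%:R))) = 0.
  by rewrite resS (eq_bigr _ (fun j _ => hterm i j)) -big_mkcond; exact: hrel.
apply/eqP; rewrite (res_neq0 (hres i)) // mulf_neq0 ?red_factor_neq0 //=.
by rewrite dvalM ?red_factor_neq0 // dval_red_factor -wS_S wiS floor_wval ?he // subrr.
Qed.

Lemma reduced_of_lin_indep n (b : 'I_n -> L) : (forall j, b j != 0) ->
  (forall j0 : 'I_n, prod_lin_indep iota
    (fun j => (wS e v (b j) - wS e v (b j0)) \is a Num.int)
    (fun j i => red i (wS e v (b j)) (b j))) ->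
  w_reduced (wS e v) b.
Proof.
move=> hb hind lam [j1 l1].
set m := minl _; set S := \sum_(j < n) _.
have hge j : lam j != 0 -> m <= wS e v (lam j *: b j).
  exact: (@minl_map_le _ (fun j => lam j != 0) (fun j => wS e v (lam j *: b j))).
have [j0 l0 hm0] :=
  @minl_map_attained _ (fun j => lam j != 0) (fun j => wS e v (lam j *: b j)) _ l1.
rewrite -/m in hm0.
pose J' j := (lam j != 0) && (wS e v (lam j *: b j) == m).
pose mu j := if J' j then resp (unit_part (lam j)) else 0.
pose J j := (wS e v (b j) - wS e v (b j0)) \is a Num.int.
have J'J j : J' j -> J j.
  case/andP=> lj /eqP hmj; rewrite /J.
  have -> : wS e v (b j) - wS e v (b j0) = (vp (lam j0) - vp (lam j))%:~R.
    by move: (wSZ lj (hb j)) (wSZ l0 (hb j0)); rewrite hmj hm0 intrB; lra.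
  exact: intr_int.
have [i hi] : exists i, \sum_(j < n | J j) iota i (mu j) * red i (wS e v (b j)) (b j) != 0.
  apply/existsP; apply: contraT; rewrite negb_exists => /forallP hall.
  have := hind j0 mu (fun i => eqP (negbNE (hall i))) j0.
  rewrite /= subrr rpred0 => /(_ isT)/eqP.
  by rewrite /mu /J' l0 -hm0 eqxx /= (negbTE (resp_unit_part_neq0 l0)).
have hterm j : iota i (resp (unit_part (lam j))) * red i (m - (vp (lam j))%:~R) (b j) =
    if J j then iota i (mu j) * red i (wS e v (b j)) (b j) else 0.
  have [J'j|nJ'j] := boolP (J' j).
    rewrite J'J // /mu J'j; case/andP: J'j => lj /eqP <-.
    by rewrite wSZ // addrC addKr.
  rewrite /mu (negbTE nJ'j) iota0 mul0r if_same.
  have [->|lj] := eqVneq (lam j) 0; first by rewrite unit_part0 (res0 hresp) iota0 mul0r.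
  rewrite redP_wS_lt ?mulr0 // ltrBlDr addrC -wSZ // lt_def hge // andbT.
  by move: nJ'j; rewrite /J' lj eq_sym.
have hle j : lam j != 0 -> m <= w i (lam j *: b j).
  by move=> lj; apply: le_trans (hge j lj) (wS_le _ _ _ _).
have [vrS resS] := @res_lincomb i n lam b m hb hle.
have : res i (S * red_factor i (Num.floor (m * (e i)%:R))) != 0.
  by rewrite resS (eq_bigr _ (fun j _ => hterm j)) -big_mkcond.
rewrite (res_neq0 (hres i)) // mulf_eq0 negb_or red_factor_neq0 andbT.
case/andP=> S0; rewrite dvalM ?red_factor_neq0 // dval_red_factor subr_eq0 => /eqP vS.
split=> //; apply/eqP; rewrite eq_le; apply/andP; split.
  by rewrite (le_trans (wS_le _ _ i _)) // wval_le ?he // vS floor_le.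
apply: (wS_ge hs) => i'; apply: (wval_sum_ge (he i') (hv i')) => // j _.
by rewrite scaler_eq0 negb_or => /andP[lj _]; apply: le_trans (hge j lj) (wS_le _ _ _ _).
Qed.

End Reduction.

Theorem mainTheorem6
  (K : fieldType) (L : fieldExtType K)
  (f : {poly K}) (theta : L)
  (hf_monic : f \is monic) (hf_irr : irreducible_poly f)
  (hf_sep : separable_poly f)
  (htheta : root (map_poly (in_alg L) f) theta)
  (hL : <<1%VS; theta>>%VS = fullv)
  (vp : K -> int) (hvp : is_dvaluation vp)
  (kp : fieldType) (resp : K -> kp) (hresp : is_residue_map vp resp)
  (pi : K) (hpi : pi != 0 /\ vp pi = 1)
  (s : nat) (hs : (0 < s)%N)
  (e : 'I_s -> nat) (he : forall i, (0 < e i)%N)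
  (v : 'I_s -> L -> int) (hv : forall i, is_dvaluation (v i))
  (hve : forall i (a : K), a != 0 -> v i (a%:A) = (e i)%:Z * vp a)
  (hdist : forall i j, i != j -> exists z : L, z != 0 /\ v i z != v j z)
  (hall : forall u : L -> int, is_dvaluation u ->
     (exists e0 : nat, (0 < e0)%N /\
        forall a : K, a != 0 -> u (a%:A) = e0%:Z * vp a) ->
     exists i, forall z : L, z != 0 -> u z = v i z)
  (k : 'I_s -> fieldType) (res : forall i, L -> k i)
  (hres : forall i, is_residue_map (v i) (res i))
  (iota : forall i, kp -> k i)
  (hiota : forall i (a : K), vring vp a -> iota i (resp a) = res i (a%:A))
  (piP : 'I_s -> L) (hpiP : forall i, piP i != 0 /\ v i (piP i) = 1)
  (n : nat) (b : 'I_n -> L) (hb : forall j, b j != 0) :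
  w_reduced (wS e v) b <->
  (forall j0 : 'I_n,
     prod_lin_indep iota
       (fun j => (wS e v (b j) - wS e v (b j0)) \is a Num.int)
       (fun j i => redP (res i) (e i) (v i) pi (piP i) (wS e v (b j)) (b j))).
Proof.
split; first exact: (lin_indep_of_reduced hvp hresp hpi hs he hv hve hres hiota hpiP hb).
exact: (reduced_of_lin_indep hvp hresp hpi hs he hv hve hres hiota hpiP hb).
Qed.
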